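(* Let $n>k\ge 0$ be integers. There is a bijection between the set $\mathcal{C}_{n-1,k}$ of Pons--Batle words and the set of Young tableaux with walls and holes of type $(k,0,n-1)$. In particular, $|\mathcal{C}_{n-1,k}|=y_{k,0,n-1}$.
   Context: Pons--Batle words: for integers $N\ge k\ge 0$, $\mathcal{C}_{N,k}$ is the set of words over the alphabet $\{\omega_1,\dots,\omega_N\}$ in which each of $\omega_1,\dots,\omega_k$ occurs exactly three times and each of $\omega_{k+1},\dots,\omega_N$ occurs exactly twice, such that in every prefix of the word and for every $i$, either $\omega_i$ does not occur in the prefix, or the number of occurrences of $\omega_i$ in the prefix is at least the number of occurrences of $\omega_j$ in the prefix for every $j>i$. Young tableaux with walls and holes: for integers $k,\ell_1,\ell_2\ge 0$ with $N:=\ell_1+\ell_2\ge k$, a Young tableau with walls and holes of type $(k,\ell_1,\ell_2)$ consists of a subset $S\subseteq\{1,\dots,N\}$ with $|S|=\ell_2$ and a bijective filling of the cells of the following three-row shape with the integers $1,\dots,k+\ell_1+2\ell_2$: the top row has cells in columns $1,\dots,k$, the middle row has cells in columns $1,\dots,N$, and the bottom row has cells exactly in the columns of $S$. The filling must increase from left to right along the top row and along the middle row, and increase from bottom to top within every column; no condition is imposed among the entries of the bottom row (adjacent bottom cells are separated by ''walls''). $y_{k,\ell_1,\ell_2}$ denotes the number of such tableaux (pairs $(S,\text{filling})$). For type $(k,0,n-1)$ the bottom row necessarily occupies all columns $1,\dots,n-1$. *)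

From mathcomp Require Import all_boot.
Set Implicit Arguments. Unset Strict Implicit. Unset Printing Implicit Defensive.

(* ---------- Pons--Batle words C_{N,k} ----------
   Letter omega_{i+1} is encoded by i : 'I_N.  A word in C_{N,k} has
   3k + 2(N-k) = 2N + k letters (for k <= N), so we represent candidate
   words as (2N+k)-tuples over 'I_N. *)

Definition pb_counts (N k : nat) (w : seq 'I_N) : bool :=
  [forall i : 'I_N, count_mem i w == (if i < k then 3 else 2)].

Definition pb_prefix (N : nat) (w : seq 'I_N) : bool :=
  [forall m : 'I_(size w).+1, forall i : 'I_N,
     (count_mem i (take m w) == 0) ||
     [forall j : 'I_N, (i < j) ==> (count_mem j (take m w) <= count_mem i (take m w))]].

Definition PB (N k : nat) : {set (2 * N + k).-tuple 'I_N} :=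
  [set w : (2 * N + k).-tuple 'I_N | pb_counts k w && pb_prefix w].

(* ---------- Young tableaux with walls and holes of type (k,l1,l2) ----------
   N := l1 + l2 columns, indexed by 'I_N (column j+1 <-> j).
   Entries 1..M with M := k + l1 + 2 l2 are encoded by 'I_M (value v+1 <-> v);
   this shift preserves the order.
   A tableau is (S, top, mid, bot) with
     S   : the set of columns carrying a bottom cell,
     top : entries of the top row (columns 1..k),
     mid : entries of the middle row (columns 1..N),
     bot : entries of the bottom row, bot j = Some _ exactly when j \in S. *)

Definition ywh_data (k l1 l2 : nat) : finType :=
  ({set 'I_(l1 + l2)} * {ffun 'I_k -> 'I_(k + l1 + 2 * l2)}
   * {ffun 'I_(l1 + l2) -> 'I_(k + l1 + 2 * l2)}
   * {ffun 'I_(l1 + l2) -> option 'I_(k + l1 + 2 * l2)})%type.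

Definition ywh_pred (k l1 l2 : nat) (t : ywh_data k l1 l2) : bool :=
  let: (Sc, top, mid, bot) := t in
  let entries := [seq top i | i : 'I_k] ++ [seq mid j | j : 'I_(l1 + l2)]
                 ++ pmap id [seq bot j | j : 'I_(l1 + l2)] in
  [&& #|Sc| == l2,
      [forall j : 'I_(l1 + l2), (j \in Sc) == (bot j != None)],
      uniq entries,
      [forall v : 'I_(k + l1 + 2 * l2), v \in entries],
      [forall i1 : 'I_k, forall i2 : 'I_k, (i1 < i2) ==> (top i1 < top i2)],
      [forall j1 : 'I_(l1 + l2), forall j2 : 'I_(l1 + l2),
          (j1 < j2) ==> (mid j1 < mid j2)],
      [forall i : 'I_k, forall j : 'I_(l1 + l2),
          (nat_of_ord i == nat_of_ord j) ==> (mid j < top i)] &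
      [forall j : 'I_(l1 + l2), forall v : 'I_(k + l1 + 2 * l2),
          (bot j == Some v) ==> (v < mid j)]].

Definition YWH (k l1 l2 : nat) : {set ywh_data k l1 l2} :=
  [set t | ywh_pred t].

Definition y (k l1 l2 : nat) : nat := #|YWH k l1 l2|.

From mathcomp Require Import all_boot zify.
Set Implicit Arguments. Unset Strict Implicit. Unset Printing Implicit Defensive.

(* A word is sent to the tableau whose column j lists, from bottom to top, the
   positions of the letter omega_(j+1): three of them for j < k and two
   otherwise, in increasing order, and the positions of all letters together
   fill 0, ..., 2N+k-1 exactly once. Conversely, the p-th letter of the word
   of a tableau is the column containing p. For the sorted position lists s of
   omega_i and t of omega_j with i < j, the prefix condition says exactly that
   s_r < t_r for every r >= 1: the middle and top rows increase, while the
   first occurrences are unconstrained, which is why the bottom row has walls. *)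

Section Positions.
Variable T : eqType.

Fixpoint positions (x : T) (s : seq T) : seq nat :=
  if s is a :: s' then
    let ps := map succn (positions x s') in if a == x then 0 :: ps else ps
  else [::].

Lemma mem_positions x s p :
  (p \in positions x s) = (p < size s) && (nth x s p == x).
Proof.
elim: s p => [|a s IH] [|p] //=.
- by case: (a == x); rewrite ?inE //; apply/mapP => -[].
- by rewrite ltnS -IH; case: (a == x); rewrite ?inE /= (mem_map succn_inj).
Qed.

Lemma sorted_positions x s : sorted ltn (positions x s).
Proof.
have sorted_succ l : sorted ltn l -> sorted ltn (map succn l).
  by rewrite sorted_map; apply: sub_sorted.
elim: s => [|a s IH] //=; case: (a == x) => /=; last exact: sorted_succ.
rewrite (path_sortedE ltn_trans) sorted_succ // andbT.
by apply/allP => _ /mapP[q _ ->].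
Qed.

Lemma mem_positions_inj x y s p :
  p \in positions x s -> p \in positions y s -> x = y.
Proof.
rewrite !mem_positions => /andP[ps /eqP <-] /andP[_ /eqP <-].
exact: set_nth_default.
Qed.

Lemma size_positions x s : size (positions x s) = count_mem x s.
Proof. by elim: s => [|a s IH] //=; case: (a == x); rewrite /= size_map IH. Qed.

Lemma count_take_positions x s m :
  count_mem x (take m s) = count (gtn m) (positions x s).
Proof.
elim: s m => [|a s IH] [|m] /=; rewrite ?count_map ?IH //.
  by case: (a == x); rewrite //= count_map; elim: (positions x s).
by case: (a == x); rewrite /= count_map.
Qed.

End Positions.

Lemma ltn_count_sorted (s : seq nat) m r : sorted ltn s ->
  (r < count (gtn m) s) = (r < size s) && (nth 0 s r < m).
Proof.
elim: s r => [|a s IH] r //= /[dup] /path_sorted ss.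
rewrite (path_sortedE ltn_trans) => /andP[/allP a_lt _].
case: (ltnP a m) => [am | ma] /=.
  by case: r => [|r]; rewrite ?am // add1n ltnS IH.
have -> : count (gtn m) s = 0.
  apply/eqP; rewrite -leqn0 leqNgt -has_count; apply/hasPn => q /a_lt aq.
  by rewrite /= -leqNgt (leq_trans ma (ltnW aq)).
case: r => [|r] /=; first by rewrite [RHS]ltnNge ma.
apply/esym/andP => -[rs]; apply/negP; rewrite -leqNgt.
exact: leq_trans ma (ltnW (a_lt _ (mem_nth 0 rs))).
Qed.

Section Ballot.
Variables s t : seq nat.
Hypotheses (s_sorted : sorted ltn s) (t_sorted : sorted ltn t).
Hypothesis size_ts : size t <= size s.
Hypothesis disjoint_st : forall p, p \in s -> p \notin t.

Lemma ballot_rowsP :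
  (forall m, (count (gtn m) s == 0) || (count (gtn m) t <= count (gtn m) s)) <->
  (forall r, 0 < r < size t -> nth 0 s r < nth 0 t r).
Proof.
have count_mono m1 m2 u : m1 <= m2 -> count (gtn m1) u <= count (gtn m2) u.
  by move=> le_m; apply: sub_count => q /= /leq_trans; apply.
split=> [ballot r /andP[r_gt0 rt] | rows m].
- have r_lt_t : r < count (gtn (nth 0 t r).+1) t by rewrite ltn_count_sorted // rt /=.
  have s_gt0 : 0 < size s by lia.
  case/orP: (ballot (nth 0 t r).+1) => [/eqP s0 | le_ts].
    (* Then t_r < s_0, and the prefix ending at s_0 holds r + 1 >= 2 letters
       of t but a single letter of s. *)
    have := ballot (nth 0 s 0).+1.
    rewrite eqn0Ngt ltn_count_sorted // s_gt0 ltnSn /= => le_ts.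
    have : ~~ (0 < count (gtn (nth 0 t r).+1) s) by rewrite s0.
    rewrite ltn_count_sorted // s_gt0 /= -leqNgt => t_lt_s0.
    have := leq_trans r_lt_t (leq_trans (count_mono _ _ t (leqW t_lt_s0)) le_ts).
    rewrite ltn_count_sorted // ltnS => /andP[rs].
    by rewrite leqNgt (sorted_ltn_nth ltn_trans 0 s_sorted) ?inE.
  have := leq_trans r_lt_t le_ts; rewrite ltn_count_sorted // ltnS => /andP[rs].
  rewrite leq_eqVlt => /orP[/eqP eq_st|] //.
  by have := disjoint_st (mem_nth 0 rs); rewrite eq_st mem_nth.
- (* With r letters of s below m, t_r < m would force s_r < m. *)
  case: posnP => //= cs; rewrite leqNgt; apply/negP => ct.
  set r := count _ s in cs ct.
  move: (ct); rewrite ltn_count_sorted // => /andP[rt t_lt].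
  have := rows r; rewrite cs rt => /(_ isT) s_lt.
  have := ltn_count_sorted m r s_sorted; rewrite ltnn (leq_trans rt size_ts).
  by rewrite (ltn_trans s_lt t_lt).
Qed.

End Ballot.

(* Row 0, the bottom row, is exempt: its cells are separated by walls. *)
Definition increasing_rows N (col : 'I_N -> seq nat) :=
  forall (i j : 'I_N) r, i < j -> 0 < r < size (col j) ->
  nth 0 (col i) r < nth 0 (col j) r.

Lemma pb_prefixP N (w : seq 'I_N) :
  reflect (forall m (i j : 'I_N), i < j ->
             (count_mem i (take m w) == 0) ||
             (count_mem j (take m w) <= count_mem i (take m w)))
          (pb_prefix w).
Proof.
apply: (iffP forallP) => [prefix m i j ij | prefix m].
  have min_lt : minn m (size w) < (size w).+1 by rewrite ltnS geq_minr.
  have /forallP/(_ i) := prefix (Ordinal min_lt).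
  rewrite /= take_min take_size => /orP[-> // | /forallP/(_ j)/implyP/(_ ij) ->].
  exact: orbT.
apply/forallP => i; case: eqP => //= nz; apply/forallP => j; apply/implyP => ij.
by case/orP: (prefix m i j ij) => // /eqP.
Qed.

Lemma PB_positionsP N k (w : (2 * N + k).-tuple 'I_N) :
  w \in PB N k <->
  (forall j : 'I_N, size (positions j w) = if j < k then 3 else 2) /\
  increasing_rows (fun j => positions j w).
Proof.
have ballot (i j : 'I_N) : i < j ->
    (forall j, size (positions j w) = if j < k then 3 else 2) ->
    (forall m, (count (gtn m) (positions i w) == 0) ||
               (count (gtn m) (positions j w) <= count (gtn m) (positions i w))) <->
    (forall r, 0 < r < size (positions j w) ->
               nth 0 (positions i w) r < nth 0 (positions j w) r).
  move=> ij sizes; apply: ballot_rowsP; rewrite ?sorted_positions //.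
    by rewrite !sizes; case: ifP => jk; [rewrite (ltn_trans ij jk) | case: ifP].
  by move=> p pi; apply/negP => /(mem_positions_inj pi) eq_ij; rewrite eq_ij ltnn in ij.
rewrite inE; split=> [/andP[/forallP counts /pb_prefixP prefix] | [sizes rows]].
  have sizes j : size (positions j w) = if j < k then 3 else 2.
    by rewrite size_positions; apply/eqP/counts.
  split=> // i j r ij; apply: (ballot i j ij sizes).1 => m.
  by rewrite -!count_take_positions prefix.
apply/andP; split.
  by apply/forallP => j; rewrite -size_positions sizes.
apply/pb_prefixP => m i j ij; rewrite !count_take_positions.
by apply/(ballot i j ij sizes).2 => r; apply: rows.
Qed.

Section Tableaux.
Variables N k : nat.
Hypothesis le_kN : k <= N.

Local Notation M := (k + 0 + 2 * N).
Local Notation tableau := (ywh_data k 0 N).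

Definition tab_set (t : tableau) : {set 'I_N} := t.1.1.1.
Definition tab_top (t : tableau) : {ffun 'I_k -> 'I_M} := t.1.1.2.
Definition tab_mid (t : tableau) : {ffun 'I_N -> 'I_M} := t.1.2.
Definition tab_bot (t : tableau) : {ffun 'I_N -> option 'I_M} := t.2.

(* The default is never used for tableaux of type (k, 0, N), where every
   column has a bottom cell. *)
Definition bottom (t : tableau) (j : 'I_N) : 'I_M := odflt (tab_mid t j) (tab_bot t j).

Definition col (t : tableau) (j : 'I_N) : seq nat :=
  [:: nat_of_ord (bottom t j), nat_of_ord (tab_mid t j)
    & if insub (val j) is Some i then [:: nat_of_ord (tab_top t i)] else [::]].

(* Top, middle and bottom cells, in the order of the entry list of [ywh_pred]. *)
Definition cell : finType := ('I_k + 'I_N + 'I_N)%type.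

Definition cell_col (c : cell) : 'I_N :=
  match c with inl (inl i) => widen_ord le_kN i | inl (inr j) | inr j => j end.

Definition cell_row (c : cell) : nat :=
  match c with inl (inl _) => 2 | inl (inr _) => 1 | inr _ => 0 end.

Definition entry (t : tableau) (c : cell) : 'I_M :=
  match c with
  | inl (inl i) => tab_top t i | inl (inr j) => tab_mid t j | inr j => bottom t j
  end.

Lemma size_col t j : size (col t j) = if j < k then 3 else 2.
Proof. by rewrite /col; case: insubP => [i -> _ | /negbTE ->]. Qed.

Lemma nth_col_entry t c : nth 0 (col t (cell_col c)) (cell_row c) = entry t c.
Proof. by case: c => [[i|j]|j]; rewrite //= /col valK. Qed.

Lemma cell_row_lt t c : cell_row c < size (col t (cell_col c)).
Proof. by rewrite size_col; case: c => [[i|j]|j] /=; [rewrite ltn_ord | case: ifP..]. Qed.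

Lemma entry_in_col t c : nat_of_ord (entry t c) \in col t (cell_col c).
Proof. by rewrite -nth_col_entry mem_nth ?cell_row_lt. Qed.

Lemma col_entry t j p :
  p \in col t j -> exists2 c, cell_col c = j & nat_of_ord (entry t c) = p.
Proof.
rewrite /col !inE; case: insubP => [i _ ij | _]; rewrite ?inE ?orbF.
  case/or3P=> /eqP->;
    [exists (inr j) | exists (inl (inr j)) | exists (inl (inl i))] => //.
  exact: val_inj.
by case/orP=> /eqP->; [exists (inr j) | exists (inl (inr j))].
Qed.

Lemma cell_col_row_inj : injective (fun c => (cell_col c, cell_row c)).
Proof.
case=> [[i|j]|j] [[i'|j']|j'] //= -[eq_col]; rewrite ?eq_col //.
by congr (inl (inl _)); apply: val_inj.
Qed.

Lemma card_cell : #|cell| = M.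
Proof. by rewrite !card_sum !card_ord addn0 mul2n -addnn addnA. Qed.

Lemma enum_cell : enum cell =
  [seq inl (inl i) | i <- enum 'I_k] ++ [seq inl (inr j) | j <- enum 'I_N] ++
  [seq inr j | j <- enum 'I_N].
Proof.
have ordE : ord_enum N = enum 'I_N by rewrite enumT unlock.
rewrite [LHS]enumT unlock /= /sum_enum unlock /= /sum_enum -!enumT ordE.
by rewrite map_cat -catA -!map_comp.
Qed.

Lemma col_disjoint t p j1 j2 : injective (entry t) ->
  p \in col t j1 -> p \in col t j2 -> j1 = j2.
Proof.
move=> inj /col_entry[c1 <- <-] /col_entry[c2 <- /val_inj/inj].
by move->.
Qed.

Lemma entry_onto t v : injective (entry t) -> v \in codom (entry t).
Proof. by move=> inj; apply: inj_card_onto inj _ v; rewrite card_cell card_ord. Qed.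

Lemma col_cover t p : injective (entry t) -> p < M -> exists j, p \in col t j.
Proof.
move=> inj pM; have /codomP[c /(congr1 val) /= pc] := entry_onto (Ordinal pM) inj.
by exists (cell_col c); rewrite pc entry_in_col.
Qed.

Lemma entry_inj t : (forall j, uniq (col t j)) ->
  (forall p j1 j2, p \in col t j1 -> p \in col t j2 -> j1 = j2) ->
  injective (entry t).
Proof.
move=> col_uniq disj c1 c2 eq_c.
have eq_col : cell_col c1 = cell_col c2.
  apply: (disj (entry t c1)); first exact: entry_in_col.
  by rewrite eq_c entry_in_col.
apply: cell_col_row_inj; congr pair => //; apply/eqP.
rewrite -(nth_uniq 0 (cell_row_lt t c1) _ (col_uniq _)); last first.
  by rewrite eq_col cell_row_lt.
by rewrite nth_col_entry eq_c -nth_col_entry eq_col.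
Qed.

Lemma sorted_colP t j : sorted ltn (col t j) <->
  bottom t j < tab_mid t j /\
  (forall i : 'I_k, i = j :> nat -> tab_mid t j < tab_top t i).
Proof.
rewrite /col; case: insubP => [i _ ij | jk] /=; rewrite ?andbT.
  split=> [/andP[-> mid_top] | [-> mid_top]]; last by rewrite mid_top.
  split=> // i' i'j; suff -> : i' = i by [].
  by apply: val_inj; rewrite /= i'j; apply: esym.
split=> [-> | [] //]; split=> // i ij.
by move: jk; rewrite /= -ij ltn_ord.
Qed.

Lemma increasing_rows_colP t : increasing_rows (col t) <->
  (forall j1 j2 : 'I_N, j1 < j2 -> tab_mid t j1 < tab_mid t j2) /\
  (forall i1 i2 : 'I_k, i1 < i2 -> tab_top t i1 < tab_top t i2).
Proof.
have col_top i : nth 0 (col t (widen_ord le_kN i)) 2 = tab_top t i.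
  exact: (nth_col_entry t (inl (inl i))).
split=> [rows | [mid_inc top_inc] j1 j2 r j12].
  split=> [j1 j2 j12 | i1 i2 i12].
    by have := rows j1 j2 1 j12; rewrite size_col; case: ifP => _; apply.
  have := rows (widen_ord le_kN i1) (widen_ord le_kN i2) 2 i12.
  by rewrite !col_top size_col (ltn_ord i2); apply.
case: r => [|[|[|r]]] //; rewrite size_col; first by move=> _; apply: mid_inc.
  case: ifP => // j2k _.
  pose i1 := Ordinal (ltn_trans j12 j2k); pose i2 := Ordinal j2k.
  have -> : j1 = widen_ord le_kN i1 by apply: val_inj.
  have -> : j2 = widen_ord le_kN i2 by apply: val_inj.
  by rewrite !col_top; apply: (top_inc i1 i2 j12).
by case: ifP.
Qed.

Lemma YWH_colsP t : t \in YWH k 0 N <->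
  [/\ tab_set t = setT, forall j, tab_bot t j = Some (bottom t j),
      injective (entry t), forall j, sorted ltn (col t j) & increasing_rows (col t)].
Proof.
have entriesE : (forall j, tab_bot t j = Some (bottom t j)) ->
    [seq tab_top t i | i <- enum 'I_k] ++ [seq tab_mid t j | j <- enum 'I_N] ++
    pmap id [seq tab_bot t j | j <- enum 'I_N] = [seq entry t c | c <- enum cell].
  move=> botE; rewrite enum_cell !map_cat; congr (_ ++ (_ ++ _)).
  - by elim: (enum 'I_k) => //= i s ->.
  - by elim: (enum 'I_N) => //= j s ->.
  - by elim: (enum 'I_N) => //= j s ->; rewrite botE.
case: t entriesE => [[[S top] mid] bot] entriesE.
rewrite inE /ywh_pred /image_mem; split.
  case/and4P=> /eqP card_S /forallP botS uniqE.
  case/and5P=> _ /forallP top_inc /forallP mid_inc /forallP mid_top /forallP bot_mid.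
  have S_T : S = setT.
    by apply/eqP; rewrite eqEcard subsetT cardsT card_ord card_S add0n leqnn.
  have botE j : bot j = Some (bottom (S, top, mid, bot) j).
    by move: (botS j); rewrite S_T in_setT /bottom /=; case: (bot j).
  split=> //.
  - by apply/injectiveP; rewrite /injectiveb /dinjectiveb -entriesE.
  - move=> j; apply/sorted_colP; split.
      have /forallP/(_ (bottom (S, top, mid, bot) j))/implyP := bot_mid j.
      by apply; rewrite botE.
    by move=> i ij; have /forallP/(_ j)/implyP := mid_top i; apply; apply/eqP.
  apply/increasing_rows_colP; split.
    by move=> j1 j2 j12; have /forallP/(_ j2)/implyP := mid_inc j1; apply.
  by move=> i1 i2 i12; have /forallP/(_ i2)/implyP := top_inc i1; apply.
case=> S_T botE inj sorted_col rows; rewrite /tab_set /= in S_T.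
have [mid_inc top_inc] := (increasing_rows_colP _).1 rows.
have col_ok j := (sorted_colP _ j).1 (sorted_col j).
apply/and4P; split.
- by rewrite S_T cardsT card_ord.
- by apply/forallP => j; rewrite S_T in_setT botE.
- by rewrite entriesE //; apply/injectiveP.
apply/and5P; split.
- by apply/forallP => v; rewrite entriesE //; apply: entry_onto.
- by apply/forallP => i1; apply/forallP => i2; apply/implyP; apply: top_inc.
- by apply/forallP => j1; apply/forallP => j2; apply/implyP; apply: mid_inc.
- by apply/forallP => i; apply/forallP => j; apply/implyP => /eqP; apply: (col_ok j).2.
apply/forallP => j; apply/forallP => v; apply/implyP.
by rewrite botE => /eqP[<-]; apply: (col_ok j).1.
Qed.

Lemma le_NM : N <= M. Proof. by rewrite addn0 mul2n -addnn addnA leq_addl. Qed.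

Definition pos_entry (w : seq 'I_N) (j : 'I_N) (r : nat) : 'I_M :=
  insubd (widen_ord le_NM j) (nth 0 (positions j w) r).

Definition tab_of_word (w : (2 * N + k).-tuple 'I_N) : tableau :=
  (setT, [ffun i => pos_entry w (widen_ord le_kN i) 2],
   [ffun j => pos_entry w j 1], [ffun j => Some (pos_entry w j 0)]).

Lemma val_pos_entry (w : (2 * N + k).-tuple 'I_N) j r : r < size (positions j w) ->
  pos_entry w j r = nth 0 (positions j w) r :> nat.
Proof.
move=> r_lt; rewrite val_insubd; case: ifP => // /negP[].
have := mem_nth 0 r_lt; rewrite mem_positions size_tuple => /andP[p_lt _].
by rewrite addn0 [k + _]addnC.
Qed.

Lemma col_tab_of_word (w : (2 * N + k).-tuple 'I_N) j :
  size (positions j w) = (if j < k then 3 else 2) ->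
  col (tab_of_word w) j = positions j w.
Proof.
move=> size_j; rewrite -[RHS](mkseq_nth 0) size_j /col /bottom /= !ffunE /=.
case: insubP => [i jk ij | /negbTE jk]; rewrite jk /= !val_pos_entry ?size_j ?jk //.
rewrite ffunE (_ : widen_ord le_kN i = j); last exact: val_inj.
by rewrite val_pos_entry ?size_j ?jk.
Qed.

Lemma tab_of_word_YWH w : w \in PB N k -> tab_of_word w \in YWH k 0 N.
Proof.
case/PB_positionsP => sizes rows; have colE j := col_tab_of_word (sizes j).
apply/YWH_colsP; split=> //.
- by move=> j; rewrite /bottom ffunE.
- apply: entry_inj => [j | p j1 j2]; rewrite !colE.
    exact: (sorted_uniq ltn_trans ltnn (sorted_positions _ _)).
  exact: mem_positions_inj.
- by move=> j; rewrite colE sorted_positions.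
by move=> i j r; rewrite !colE; apply: rows.
Qed.

Lemma pos_N_gt0 (p : 'I_(2 * N + k)) : 0 < N.
Proof. have := ltn_ord p; lia. Qed.

Definition letter (t : tableau) (p : 'I_(2 * N + k)) : 'I_N :=
  odflt (Ordinal (pos_N_gt0 p)) [pick j | nat_of_ord p \in col t j].

Definition word_of_tab (t : tableau) : (2 * N + k).-tuple 'I_N :=
  [tuple letter t p | p < 2 * N + k].

Lemma letterE t p j : t \in YWH k 0 N -> (letter t p == j) = (nat_of_ord p \in col t j).
Proof.
case/YWH_colsP => _ _ inj _ _; rewrite /letter; case: pickP => [j' pj' | none] /=.
  by apply/eqP/idP => [<- // | pj]; apply: col_disjoint inj pj' pj.
have p_lt : nat_of_ord p < M by rewrite addn0 [k + _]addnC.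
by have [j' pj'] := col_cover inj p_lt; have := none j'; rewrite pj'.
Qed.

Lemma positions_word_of_tab t j :
  t \in YWH k 0 N -> positions j (word_of_tab t) = col t j.
Proof.
move=> tY; have [_ _ _ sorted_col _] := (YWH_colsP t).1 tY.
apply: (irr_sorted_eq ltn_trans ltnn (sorted_positions _ _) (sorted_col j)) => p.
rewrite mem_positions size_tuple; case: ltnP => p_lt; rewrite ?andTb ?andFb.
  by rewrite -(tnth_nth j _ (Ordinal p_lt)) tnth_mktuple letterE.
apply/esym/negbTE/negP => /col_entry[c _ eq_p]; have := ltn_ord (entry t c).
by rewrite eq_p ltnNge addn0 [k + _]addnC p_lt.
Qed.

Lemma word_of_tab_PB t : t \in YWH k 0 N -> word_of_tab t \in PB N k.
Proof.
move=> tY; have [_ _ _ _ rows] := (YWH_colsP t).1 tY.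
apply/PB_positionsP; split=> [j | i j r]; rewrite !positions_word_of_tab //.
  exact: size_col.
exact: rows.
Qed.

Lemma tab_of_wordK w : w \in PB N k -> word_of_tab (tab_of_word w) = w.
Proof.
move=> wPB; have [sizes _] := (PB_positionsP w).1 wPB.
apply: eq_from_tnth => p; rewrite tnth_mktuple; apply/eqP.
rewrite letterE ?tab_of_word_YWH // col_tab_of_word // mem_positions size_tuple ltn_ord.
by rewrite -tnth_nth eqxx.
Qed.

Lemma word_of_tabK t : t \in YWH k 0 N -> tab_of_word (word_of_tab t) = t.
Proof.
move=> tY; have [S_T botE _ _ _] := (YWH_colsP t).1 tY.
have entryE c : pos_entry (word_of_tab t) (cell_col c) (cell_row c) = entry t c.
  by rewrite /pos_entry positions_word_of_tab // nth_col_entry valKd.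
case: t tY S_T botE entryE => [[[S top] mid] bot] _ /= S_T botE entryE.
rewrite /tab_of_word /tab_set /= in S_T *; rewrite S_T.
congr (_, _, _, _); apply/ffunP => j; rewrite !ffunE.
- exact: (entryE (inl (inl j))).
- exact: (entryE (inl (inr j))).
by rewrite botE; congr Some; apply: (entryE (inr j)).
Qed.

End Tableaux.

Theorem lemma8 (n k : nat) (hkn : k < n) :
  (exists f : {w | w \in PB (n - 1) k} -> {t | t \in YWH k 0 (n - 1)},
      bijective f)
  /\ #|PB (n - 1) k| = y k 0 (n - 1).
Proof.
have le_kN : k <= n - 1 by lia.
pose F (w : {w | w \in PB (n - 1) k}) : {t | t \in YWH k 0 (n - 1)} :=
  exist (fun t => t \in YWH k 0 (n - 1)) _ (tab_of_word_YWH le_kN (valP w)).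
pose G (t : {t | t \in YWH k 0 (n - 1)}) : {w | w \in PB (n - 1) k} :=
  exist (fun w => w \in PB (n - 1) k) _ (word_of_tab_PB le_kN (valP t)).
have bij_F : bijective F.
  exists G => [w | t]; apply: val_inj; first exact: tab_of_wordK (valP w).
  exact: word_of_tabK (valP t).
split; first by exists F.
by have := bij_eq_card bij_F; rewrite !card_sig.
Qed.
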